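(* Let $\Gamma$ be a compact abelian group (written multiplicatively) such that for every $a\in\mathbb{N}^{\times}$ the subgroup $\omega_a(\Gamma)$ has finite index in $\Gamma$, the kernel $\ker\omega_a$ is finite, and $|\ker\omega_{ab}|=|\ker\omega_a|\cdot|\ker\omega_b|$ for all $a,b\in\mathbb{N}^{\times}$, where $\omega_a(g)=g^a$. For $a\in\mathbb{N}^{\times}$ let $\Gamma_a:=\{(a,g):g\in\Gamma\}$, and give $\Lambda_\Gamma:=\bigcup_{a\in\mathbb{N}^{\times}}\Gamma_a$ the topology in which each $\Gamma_a$ is a compact open copy of $\Gamma$. Define $r,s:\Lambda_\Gamma\to\Lambda^1:=\Gamma$ and $d:\Lambda_\Gamma\to\mathbb{N}^{\times}$ by $r(a,g)=g$, $s(a,g)=g^a$, $d(a,g)=a$, and define composition by $(a,g)(b,g^a):=(ab,g)$ (the element $(1,g)$ being identified with the object $g$). Then $\Lambda=(\Gamma,\Lambda_\Gamma,r,s,d)$ is a topological $\mathbb{N}^{\times}$-graph, and it is row-finite and has no sources.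
   Context: $\mathbb{N}^{\times}=\{a\in\mathbb{Z}:a>0\}$ is the multiplicative semigroup of positive integers. A topological $\mathbb{N}^{\times}$-graph (a topological higher-rank graph in Yamashita's sense, with degree semigroup $\mathbb{N}^{\times}\cong\mathbb{N}^\infty$ written multiplicatively) is a small category $\Lambda$ whose object set $\Lambda^1$ and morphism set are topological spaces (locally compact Hausdorff), together with a functor $d$ (the degree) from $\Lambda$ to $\mathbb{N}^{\times}$, such that: the range map $r$ is continuous, the source map $s$ is a local homeomorphism, $d$ is continuous, composition is continuous and open, and the factorisation property holds: if $d(\lambda)=ab$ then there are unique $\mu,\nu$ with $d(\mu)=a$, $d(\nu)=b$ and $\lambda=\mu\nu$. Write $\Lambda^a=d^{-1}(a)$. $\Lambda$ is row-finite with no sources if each $r|_{\Lambda^a}:\Lambda^a\to\Lambda^1$ is proper and surjective. *)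

From HB Require Import structures.
From mathcomp Require Import all_boot all_order all_algebra.
From mathcomp Require Import all_classical all_reals all_analysis.
From mathcomp Require Import finmap.
Set Implicit Arguments. Unset Strict Implicit. Unset Printing Implicit Defensive.
Import Order.TTheory GRing.Theory Num.Theory.
Local Open Scope classical_set_scope.

(*  X       : object space (identified with Lambda^1 via obj)          *)
(*  comp    : composition, only meaningful on composable pairs         *)
(*            (l1, l2) with s l1 = r l2.                               *)

Definition composable (X L : Type) (r s : L -> X) : set (L * L) :=
  [set p | s p.1 = r p.2].

(* s is a local homeomorphism: continuous, and every point has an open
   neighbourhood U on which s is injective and maps open subsets of U to
   open sets (so s(U) is open and s|_U : U -> s(U) is a homeomorphism). *)
Definition local_homeomorphism (X L : topologicalType) (f : L -> X) : Prop :=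
  continuous f /\
  forall l : L, exists U : set L,
    [/\ open U, U l, {in U &, injective f} &
        forall V : set L, open V -> V `<=` U -> open (f @` V)].

Record is_top_Nx_graph (X L : topologicalType) (obj : X -> L)
    (r s : L -> X) (d : L -> nat) (comp : L -> L -> L) : Prop := {
  tg_X_hausdorff : hausdorff_space X;
  tg_X_lcompact : locally_compact [set: X];
  tg_L_hausdorff : hausdorff_space L;
  tg_L_lcompact : locally_compact [set: L];
  tg_r_obj : forall x, r (obj x) = x;
  tg_s_obj : forall x, s (obj x) = x;
  tg_r_comp : forall l1 l2, s l1 = r l2 -> r (comp l1 l2) = r l1;
  tg_s_comp : forall l1 l2, s l1 = r l2 -> s (comp l1 l2) = s l2;
  tg_id_left : forall l, comp (obj (r l)) l = l;
  tg_id_right : forall l, comp l (obj (s l)) = l;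
  tg_assoc : forall l1 l2 l3, s l1 = r l2 -> s l2 = r l3 ->
      comp (comp l1 l2) l3 = comp l1 (comp l2 l3);
  tg_d_pos : forall l, (0 < d l)%N;
  tg_d_obj : forall x, d (obj x) = 1%N;
  tg_d_comp : forall l1 l2, s l1 = r l2 -> d (comp l1 l2) = (d l1 * d l2)%N;
  tg_obj_cont : continuous obj;
  tg_r_cont : continuous r;
  tg_s_lhomeo : local_homeomorphism s;
  tg_d_cont : continuous d;   (* nat carries the discrete topology *)
  tg_comp_cont : {within composable r s, continuous (fun p => comp p.1 p.2)};
  tg_comp_open : forall U : set (L * L), open U ->
      open ((fun p => comp p.1 p.2) @` (U `&` composable r s));
  tg_factorisation : forall (l : L) (a b : nat), d l = (a * b)%N ->
      exists m n, [/\ d m = a, d n = b, s m = r n & l = comp m n] /\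
      forall m' n', d m' = a -> d n' = b -> s m' = r n' -> l = comp m' n' ->
        m' = m /\ n' = n
}.

(* row-finite with no sources: each r|_{Lambda^a} is proper and surjective *)
Definition row_finite_no_sources (X L : topologicalType)
    (r : L -> X) (d : L -> nat) : Prop :=
  forall a : nat, (0 < a)%N ->
    (forall K : set X, compact K -> compact ([set l | d l = a] `&` r @^-1` K))
    /\ (forall x : X, exists l, d l = a /\ r l = x).

(* The graph Lambda_Gamma of a compact abelian group Gamma (written     *)
(* additively here, so omega_a(g) = g^a becomes g *+ a).                *)
(* Lambda_Gamma = disjoint union over a in N^x of copies Gamma_a of     *)
(* Gamma is modelled as nat * Gamma with the product topology (nat      *)
(* discrete), the pair (n, g) standing for (a, g) with a = n + 1.       *)
Section GroupGraph.
Local Open Scope ring_scope.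
Variable G : topologicalZmodType.

Definition omega (a : nat) (g : G) : G := g *+ a.
Definition kerw (a : nat) : set G := [set g | omega a g = 0].
Definition cosets_imw (a : nat) : set (set G) :=
  [set C | exists g : G, C = [set g + omega a h | h in [set: G]]].

Definition LG := (nat * G)%type.
Definition LG_obj (g : G) : LG := (0%N, g).
Definition LG_r (p : LG) : G := p.2.
Definition LG_s (p : LG) : G := omega p.1.+1 p.2.
Definition LG_d (p : LG) : nat := p.1.+1.
(* (a, g)(b, g^a) = (ab, g) *)
Definition LG_comp (p q : LG) : LG := ((p.1.+1 * q.1.+1).-1, p.2).
End GroupGraph.

From HB Require Import structures.
From mathcomp Require Import all_boot all_order all_algebra.
From mathcomp Require Import all_classical all_reals all_analysis.
From mathcomp Require Import finmap.
Import Order.TTheory GRing.Theory Num.Theory.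
Set Implicit Arguments. Unset Strict Implicit. Unset Printing Implicit Defensive.
Local Open Scope classical_set_scope.

(* Lambda_Gamma is nat * Gamma with nat discrete, so every topological axiom can
   be checked one slice {n} * Gamma at a time, where the maps involved are the
   omega_a; the category and factorisation axioms are arithmetic of degrees.
   The only real work is that s is a local homeomorphism: omega_a is locally
   injective because its kernel is finite, hence discrete, and it is an open map
   because its range is open (the complement of finitely many compact cosets)
   and omega_a V = range omega_a minus omega_a (complement of V + ker omega_a),
   the last image being compact. *)

Lemma pair_continuous (U V : topologicalType) (u : U) :
  continuous (pair u : V -> U * V).
Proof.
by move=> v; apply: (@cvg_pair _ _ _ _ (nbhs u)); [exact: cvg_cst | exact: cvg_id].
Qed.

Lemma hausdorff_prod (U V : topologicalType) :
  hausdorff_space U -> hausdorff_space V -> hausdorff_space (U * V)%type.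
Proof.
have sep (W : topologicalType) (f : (U * V)%type -> W) (x y : U * V) :
    continuous f -> hausdorff_space W -> f x != f y ->
    exists2 AB, (x \in AB.1 /\ y \in AB.2) &
      [/\ open AB.1, open AB.2 & AB.1 `&` AB.2 == set0].
  rewrite open_hausdorff => cf hW /hW [[A B] /= [+ +] [oA oB /eqP AB0]].
  move=> Afx Bfy; exists (f @^-1` A, f @^-1` B); rewrite ?inE //=.
  split; [exact: open_comp | exact: open_comp |].
  by rewrite -preimage_setI AB0 preimage_set0.
move=> hU hV; rewrite open_hausdorff => -[x1 x2] [y1 y2] xy.
have [e1|n1] := eqVneq x1 y1.
  apply: (sep _ snd) hV _ => [z|/=]; first exact: cvg_snd.
  by apply: contraNneq xy => e2; rewrite e1 e2.
apply: (sep U fst) => // z; exact: cvg_fst.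
Qed.

Section NatSlices.
Variable T : topologicalType.
Implicit Types (p : nat * T) (V : set (nat * T)).

Lemma near_fst p : \forall q \near p, q.1 = p.1.
Proof. exact: (cvg_fst (discrete_set1 p.1)). Qed.

Lemma continuous_slices (U : topologicalType) (f : nat * T -> U) :
  (forall n, continuous (fun x => f (n, x))) -> continuous f.
Proof.
move=> fn [n x]; apply: (@cvg_trans _ ((fun q => f (n, q.2)) @ (n, x))).
  by apply: near_eq_cvg; apply: filterS (near_fst (n, x)) => -[m y] /= ->.
apply: (@continuous_comp _ _ _ snd (fun y => f (n, y)) (n, x)).
  exact: cvg_snd.
exact: fn.
Qed.

Lemma open_slice V (n : nat) : open V -> open [set x | V (n, x)].
Proof.
move=> oV; apply: (@open_comp T (nat * T)%type (pair n)) => // x _.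
exact: pair_continuous.
Qed.

Lemma open_slice_image (n : nat) (W : set T) : open W -> open (pair n @` W).
Proof.
move=> oW; have -> : pair n @` W = fst @^-1` [set n] `&` snd @^-1` W.
  apply/seteqP; split => [_ [x Wx <-] //|[m x] [/= -> Wx]]; by exists x.
apply: openI; apply: open_comp.
- by move=> z _; exact: cvg_fst.
- exact: discrete_open.
- by move=> z _; exact: cvg_snd.
- exact: oW.
Qed.

Lemma open_map_slices (U : topologicalType) (f : nat * T -> U) :
  (forall n W, open W -> open ((fun x => f (n, x)) @` W)) ->
  forall V, open V -> open (f @` V).
Proof.
move=> fn V oV.
have -> : f @` V = \bigcup_n (fun x => f (n, x)) @` [set x | V (n, x)].
  apply/seteqP; split => [_ [[n x] Vnx <-]|_ [n _ [x Vnx <-]]].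
    by exists n => //; exists x.
  by exists (n, x).
by apply: bigcup_open => n _; apply: fn; exact: open_slice.
Qed.

End NatSlices.

Lemma locally_compact_hausdorff (T : topologicalType) : hausdorff_space T ->
  (forall x : T, exists2 K, nbhs x K & compact K) -> locally_compact [set: T].
Proof.
move=> hT cK x _; have [K xK cptK] := cK x; rewrite withinET; exists K => //.
by split => //; exact: compact_closed.
Qed.

Lemma closed_image_continuous (T U : topologicalType) (f : T -> U) (C : set T) :
  compact [set: T] -> hausdorff_space U -> continuous f -> closed C ->
  closed (f @` C).
Proof.
move=> cT hU cf cC; apply: compact_closed => //; apply: continuous_compact.
  exact: continuous_subspaceT.
exact: subclosed_compact cC cT _.
Qed.

Section Multiplication.
Local Open Scope ring_scope.
Variable G : topologicalZmodType.
Implicit Types (a : nat) (g h x y : G).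

Lemma omegaB a x y : omega a (x - y) = omega a x - omega a y.
Proof. exact: mulrnBl. Qed.

Lemma omega_continuous a : continuous (omega a : G -> G).
Proof.
elim: a => [|a IH] x; first exact: cvg_cst.
have -> : omega a.+1 = (fun z : G * G => z.1 + z.2) \o (fun g => (g, omega a g)).
  by apply: funext => g; rewrite /omega /= mulrS.
apply: continuous_comp; last exact: add_continuous.
by apply: cvg_pair; [exact: cvg_id | exact: IH].
Qed.

Lemma addl_continuous h : continuous (fun x : G => h + x).
Proof.
move=> x; apply: (@continuous_comp _ _ _ (pair h) (fun z : G * G => z.1 + z.2)).
  exact: pair_continuous.
exact: add_continuous.
Qed.

Lemma omega0 a : omega a (0 : G) = 0.
Proof. exact: mul0rn. Qed.

Lemma omega_coset_eq a g h : [set g + omega a x | x in [set: G]] h ->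
  [set g + omega a x | x in [set: G]] = [set h + omega a x | x in [set: G]].
Proof.
move=> [x _ <-]; apply/seteqP; split => _ [y _ <-].
  by exists (y - x) => //; rewrite omegaB addrA addrAC addrK.
by exists (x + y) => //; rewrite /omega mulrnDl addrA.
Qed.

Lemma omega_locally_injective a g : hausdorff_space G -> finite_set (@kerw G a) ->
  exists U : set G, [/\ open U, U g & {in U &, injective (omega a)}].
Proof.
move=> hG fin; pose K : set G := kerw a `\` [set 0].
have cK : closed K.
  apply: accessible_finite_set_closed.1; first exact: hausdorff_accessible.
  exact: finite_setD.
have : nbhs (g, g) ((fun z : G * G => z.1 - z.2) @^-1` ~` K).
  apply: sub_continuous; rewrite /= subrr; apply: open_nbhs_nbhs; split.
    by rewrite openC.
  by move=> [_ /(_ erefl)].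
case=> -[A B] /= [nA nB] AB; have : nbhs g (A `&` B) by exact: filterI.
rewrite nbhsE => -[W [oW Wg] WAB]; exists W; split => // x y.
move=> /set_mem Wx /set_mem Wy exy.
have [Ax _] := WAB x Wx; have [_ By] := WAB y Wy.
apply/eqP; rewrite -subr_eq0; apply/negP => nxy; apply: (AB (x, y) (conj Ax By)); split.
  by rewrite /kerw /= omegaB exy subrr.
by move=> /= /eqP.
Qed.

Section CompactHausdorff.
Hypotheses (Gcompact : compact [set: G]) (Ghausdorff : hausdorff_space G).

Lemma omega_range_open a : finite_set (@cosets_imw G a) ->
  open (range (@omega G a)).
Proof.
move=> fin; pose coset (g : G) : set G := [set g + omega a x | x in [set: G]].
have coset_refl g : coset g g by exists 0; rewrite // omega0 addr0.
have -> : range (omega a) = coset 0.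
  by apply/seteqP; split => _ [x _ <-]; exists x; rewrite ?add0r.
rewrite -closedC.
have -> : ~` coset 0 = \bigcup_(C in cosets_imw a `\` [set coset 0]) C.
  apply/seteqP; split => [x nx|x [_ [[g ->] /= ng] gx] x0].
    by exists (coset x) => //; split => [|/= e]; [exists x | apply: nx; rewrite -e].
  by apply: ng; rewrite /coset (omega_coset_eq gx) (omega_coset_eq x0).
apply: closed_bigcup; first exact: finite_setD.
move=> _ [[g ->] _]; apply: closed_image_continuous => //.
  move=> x; apply: (@continuous_comp _ _ _ (omega a) (fun y => g + y)).
    exact: omega_continuous.
  exact: addl_continuous.
Qed.

Lemma omega_open_map a : finite_set (@cosets_imw G a) ->
  forall V : set G, open V -> open (omega a @` V).
Proof.
move=> fin V oV; pose P := \bigcup_(k in kerw a) [set x | V (- k + x)].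
have oP : open P.
  apply: bigcup_open => k _.
  by apply: (@open_comp _ _ (fun x => - k + x)) => // x _; exact: addl_continuous.
have -> : omega a @` V = range (omega a) `&` ~` (omega a @` ~` P).
  apply/seteqP; split => [_ [v Vv <-]|_ [[x _ <-] nPx]].
    split=> [|[y nPy yv]]; first by exists v.
    by apply: nPy; exists (y - v); rewrite /kerw /= ?omegaB ?yv ?subrr // opprB subrK.
  have [k kk Vk] : P x by apply: contrapT => nPx'; apply: nPx; exists x.
  by exists (- k + x) => //; rewrite addrC omegaB kk subr0.
apply: openI; first exact: omega_range_open.
rewrite openC; apply: closed_image_continuous => //; first exact: omega_continuous.
by rewrite closedC.
Qed.
End CompactHausdorff.

End Multiplication.

Section GroupGraph.
Variable G : topologicalZmodType.
Implicit Types (p q : LG G) (g : G).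

Lemma LG_d_comp p q : LG_d (LG_comp p q) = (LG_d p * LG_d q)%N.
Proof. by rewrite /LG_d /LG_comp prednK ?muln_gt0. Qed.

Lemma LG_s_comp p q : LG_s p = LG_r q -> LG_s (LG_comp p q) = LG_s q.
Proof.
move=> spq; change (omega (LG_d (LG_comp p q)) p.2 = LG_s q).
by rewrite LG_d_comp /LG_s /LG_d -/(LG_r q) -spq /LG_s /omega mulrnA.
Qed.

Lemma LG_comp_assoc p1 p2 p3 :
  LG_comp (LG_comp p1 p2) p3 = LG_comp p1 (LG_comp p2 p3).
Proof.
change (((LG_d (LG_comp p1 p2) * LG_d p3).-1, p1.2) =
  ((LG_d p1 * LG_d (LG_comp p2 p3)).-1, p1.2)).
by rewrite !LG_d_comp mulnA.
Qed.

Lemma LG_s_continuous : continuous (@LG_s G).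
Proof. by apply: continuous_slices => n; exact: (@omega_continuous G n.+1). Qed.

Lemma LG_d_continuous : continuous (@LG_d G).
Proof. by apply: continuous_slices => n x; exact: cvg_cst. Qed.

Lemma LG_comp_continuous :
  continuous (fun pq : LG G * LG G => LG_comp pq.1 pq.2).
Proof.
move=> [p q]; apply: (@cvg_pair _ _ _ _ (nbhs (LG_comp p q).1)); last first.
  by apply: (@continuous_comp _ _ _ fst snd); [exact: cvg_fst | exact: cvg_snd].
apply/discrete_cvg; apply: (@filterS2 _ (nbhs (p, q)) _
  [set z | z.1.1 = p.1] [set z | z.2.1 = q.1]).
- by move=> [[n g] [m h]] /= -> ->.
- exact: (cvg_fst (near_fst p)).
- exact: (cvg_snd (near_fst q)).
Qed.

Lemma LG_comp_image_slices (U : set (LG G * LG G)) :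
  (fun pq => LG_comp pq.1 pq.2) @` (U `&` composable (@LG_r G) (@LG_s G)) =
  \bigcup_(nm : nat * nat) pair (nm.1.+1 * nm.2.+1).-1 @`
     [set g | U ((nm.1, g), (nm.2, omega nm.1.+1 g))].
Proof.
apply/seteqP; split => [_ [[[n g] [m h]] [Upq /= shr] <-]|_ [[n m] _ [g Ug <-]]].
  by exists (n, m) => //; exists g; rewrite //= -[omega _ _]/(LG_s (n, g)) shr.
by exists ((n, g), (m, omega n.+1 g)).
Qed.

Lemma LG_comp_open_map (U : set (LG G * LG G)) : open U ->
  open ((fun pq => LG_comp pq.1 pq.2) @` (U `&` composable (@LG_r G) (@LG_s G))).
Proof.
move=> oU; rewrite LG_comp_image_slices; apply: bigcup_open => -[n m] _.
apply: open_slice_image; apply: open_comp oU => g _.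
rewrite /continuous_at /=.
apply: (@cvg_pair _ _ _ _ (nbhs (n, g)) (nbhs (m, omega n.+1 g))).
  exact: pair_continuous.
apply: (@continuous_comp _ _ _ (omega n.+1) (pair m)).
  exact: omega_continuous.
exact: pair_continuous.
Qed.

Lemma LG_factorisation p a b : LG_d p = (a * b)%N ->
  exists q1 q2,
    [/\ LG_d q1 = a, LG_d q2 = b, LG_s q1 = LG_r q2 & p = LG_comp q1 q2] /\
  forall q1' q2', LG_d q1' = a -> LG_d q2' = b -> LG_s q1' = LG_r q2' ->
    p = LG_comp q1' q2' -> q1' = q1 /\ q2' = q2.
Proof.
case: p => n g; case: a => [|a]; first by rewrite mul0n.
case: b => [|b]; first by rewrite muln0.
rewrite /LG_d /= => nab; exists (a, g), (b, omega a.+1 g); split.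
  by split => //; rewrite /LG_comp -nab.
move=> [a' g'] [b' h'] [->] [->]; rewrite /LG_s /LG_r /= => <- [_ ->].
by split.
Qed.

Lemma LG_row_finite_no_sources : row_finite_no_sources (@LG_r G) (@LG_d G).
Proof.
move=> a a0; split => [K cK|g]; last by exists (a.-1, g); rewrite /LG_d prednK.
have -> : [set p | LG_d p = a] `&` @LG_r G @^-1` K = [set a.-1] `*` K.
  apply/seteqP; split => -[n g]; rewrite /LG_d /LG_r /= => -[na Kg]; split => //.
    by rewrite -na.
  by rewrite na prednK.
by apply: compact_setX => //; exact: compact_set1.
Qed.

Section CompactHausdorff.
Hypotheses (Gcompact : compact [set: G]) (Ghausdorff : hausdorff_space G).
Hypothesis Hindex : forall a : nat, (0 < a)%N -> finite_set (@cosets_imw G a).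
Hypothesis Hker : forall a : nat, (0 < a)%N -> finite_set (@kerw G a).

Lemma LG_s_local_homeomorphism : local_homeomorphism (@LG_s G).
Proof.
split=> [|[n g]]; first exact: LG_s_continuous.
have [W [oW Wg Winj]] := omega_locally_injective g Ghausdorff (Hker (ltn0Sn n)).
exists (pair n @` W); split; first exact: open_slice_image.
- by exists g.
- move=> _ _ /set_mem [x Wx <-] /set_mem [y Wy <-] /=.
  by move/(Winj _ _ (mem_set Wx) (mem_set Wy)) ->.
move=> V oV _; apply: open_map_slices oV => m.
exact: omega_open_map (Hindex (ltn0Sn m)).
Qed.

End CompactHausdorff.
End GroupGraph.

Theorem proposition3p2 (G : topologicalZmodType)
  (Gcompact : compact [set: G]) (Ghausdorff : hausdorff_space G)
  (Hindex : forall a : nat, (0 < a)%N -> finite_set (@cosets_imw G a))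
  (Hker : forall a : nat, (0 < a)%N -> finite_set (@kerw G a))
  (Hmult : forall a b : nat, (0 < a)%N -> (0 < b)%N ->
      #|` fset_set (@kerw G (a * b)) | =
      (#|` fset_set (@kerw G a) | * #|` fset_set (@kerw G b) |)%N) :
  is_top_Nx_graph (@LG_obj G) (@LG_r G) (@LG_s G) (@LG_d G) (@LG_comp G) /\
  row_finite_no_sources (@LG_r G) (@LG_d G).
Proof.
split; last exact: LG_row_finite_no_sources.
have hL : hausdorff_space (LG G) := hausdorff_prod discrete_hausdorff Ghausdorff.
split => //.
- by apply: locally_compact_hausdorff => // x; exists [set: G]; first exact: filterT.
- apply: locally_compact_hausdorff => // p; exists ([set p.1] `*` [set: G]).
    by apply: filterS (near_fst p) => q /= ->.
  by apply: compact_setX => //; exact: compact_set1.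
- exact: LG_s_comp.
- by case=> n g; rewrite /LG_comp mul1n.
- by case=> n g; rewrite /LG_comp muln1.
- by move=> *; exact: LG_comp_assoc.
- exact: pair_continuous.
- by move=> p; exact: cvg_snd.
- exact: LG_s_local_homeomorphism.
- exact: LG_d_continuous.
- exact/continuous_subspaceT/LG_comp_continuous.
- exact: LG_comp_open_map.
- exact: LG_factorisation.
Qed.
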